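(* Let $\sigma>0$, $k\ge 0$ an integer, $\rho\ge 0$, and let $\mathcal{O}$ be a finite set of objects in $\mathbb{R}^d$ such that every subset $\mathcal{O}'\subseteq\mathcal{O}$ that is $\sigma$-exposed has density at most $\rho$. If $\mathcal{O}$ is $(\sigma,k)$-exposed, then the density of $\mathcal{O}$ is at most $(2k+1)\rho$.
   Context: For sets $X, Y\subseteq\mathbb{R}^d$ and $\sigma>0$, $X$ $\sigma$-shadows $Y$ if $\max_{q\in Y} \mathrm{dist}(q, X) \le \sigma\cdot \mathrm{diam}(Y)$, where $\mathrm{dist}(q,X)=\min_{p\in X}\|q-p\|$. A set of objects is $\sigma$-exposed if no object in the set $\sigma$-shadows another (distinct) object of the set. A set $\mathcal{O}$ of objects is $(\sigma,k)$-exposed if each object of $\mathcal{O}$ is $\sigma$-shadowed by at most $k$ other objects of $\mathcal{O}$. The density of a finite set $\mathcal{O}$ of objects in $\mathbb{R}^d$ is the maximum, over all closed balls $B$, of the number of objects $o\in\mathcal{O}$ that intersect $B$ and satisfy $\mathrm{diam}(o)\ge \mathrm{diam}(B)$. *)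

From Stdlib Require Import Reals List.
Open Scope R_scope.

(* Points of R^d are represented by functions nat -> R whose coordinates
   of index >= d vanish (see inRd). *)
Definition Pt := nat -> R.

Definition inRd (d : nat) (x : Pt) : Prop := forall i, (d <= i)%nat -> x i = 0.

Fixpoint sqdist (d : nat) (x y : Pt) : R :=
  match d with
  | O => 0
  | S n => sqdist n x y + (x n - y n) ^ 2
  end.

Definition edist (d : nat) (x y : Pt) : R := sqrt (sqdist d x y).

Definition PSet := Pt -> Prop.

Definition subset_Rd (d : nat) (X : PSet) : Prop := forall x, X x -> inRd d x.

Definition is_diam (d : nat) (Y : PSet) (D : R) : Prop :=
  is_lub (fun r => exists p q, Y p /\ Y q /\ r = edist d p q) D.

(* Objects: nonempty compact (closed and bounded) subsets of R^d *)
Definition is_closed_set (d : nat) (X : PSet) : Prop :=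
  forall x, inRd d x ->
    (forall eps, 0 < eps -> exists p, X p /\ edist d x p < eps) -> X x.

Definition is_bounded_set (d : nat) (X : PSet) : Prop :=
  exists M, forall p q, X p -> X q -> edist d p q <= M.

Definition is_object (d : nat) (X : PSet) : Prop :=
  subset_Rd d X /\ (exists x, X x) /\ is_closed_set d X /\ is_bounded_set d X.

(* X sigma-shadows Y : max_{q in Y} dist(q, X) <= sigma * diam(Y).
   For X compact nonempty, dist(q,X) is attained, so this says: *)
Definition shadows (d : nat) (sigma : R) (X Y : PSet) : Prop :=
  exists D, is_diam d Y D /\
    forall q, Y q -> exists p, X p /\ edist d q p <= sigma * D.

(* Finite sets of objects are duplicate-free lists; a subset of O is a
   duplicate-free list all of whose members are in O. *)
Definition sub_fam (O' O : list PSet) : Prop := NoDup O' /\ incl O' O.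

Definition exposed (d : nat) (sigma : R) (O : list PSet) : Prop :=
  forall X Y, In X O -> In Y O -> X <> Y -> ~ shadows d sigma X Y.

Definition exposed_k (d : nat) (sigma : R) (k : nat) (O : list PSet) : Prop :=
  forall Y, In Y O ->
    forall S, sub_fam S O ->
      (forall X, In X S -> X <> Y /\ shadows d sigma X Y) ->
      (length S <= k)%nat.

Definition closed_ball (d : nat) (c : Pt) (r : R) : PSet :=
  fun x => inRd d x /\ edist d c x <= r.

Definition intersects (X Y : PSet) : Prop := exists x, X x /\ Y x.

Definition density_le (d : nat) (O : list PSet) (rho : R) : Prop :=
  forall (c : Pt) (r : R), inRd d c -> 0 <= r ->
    forall S, sub_fam S O ->
      (forall o, In o S ->
         intersects o (closed_ball d c r) /\
         exists Do Db, is_diam d o Do /\ is_diam d (closed_ball d c r) Db /\ Db <= Do) ->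
      INR (length S) <= rho.

(* Greedy extraction of an exposed subfamily.  Orient an edge X -> Y when X
   sigma-shadows Y (X <> Y).  The hypothesis bounds every in-degree by k, in O
   and hence in each subfamily T, so the degrees in T sum to at most 2k|T| and
   some Y has at most 2k neighbours.  Keeping Y and discarding its closed
   neighbourhood (at most 2k+1 objects) and iterating yields an independent,
   i.e. sigma-exposed, subfamily I with |T| <= (2k+1)|I|.  Applied to the
   objects counted for a ball B, the density of I at B bounds |I| by rho. *)

From Stdlib Require Import Bool Reals List Lia Lra Wf_nat ClassicalEpsilon Classical.
Open Scope R_scope.

Section ListCounting.
Local Open Scope nat_scope.
Context {U : Type}.

Lemma length_filter_orb (p q : U -> bool) (l : list U) :
  length (filter (fun x => p x || q x) l) <= length (filter p l) + length (filter q l).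
Proof. induction l as [|a l IH]; simpl; [lia|]. destruct (p a), (q a); simpl; lia. Qed.

Lemma list_sum_map_add (f g : U -> nat) (l : list U) :
  list_sum (map (fun x => f x + g x) l) = list_sum (map f l) + list_sum (map g l).
Proof. induction l as [|x l IH]; simpl; lia. Qed.

Lemma list_sum_map_length_filter_swap (f : U -> U -> bool) (A B : list U) :
  list_sum (map (fun a => length (filter (f a) B)) A) =
  list_sum (map (fun b => length (filter (fun a => f a b) A)) B).
Proof.
  induction A as [|a A IH]; simpl.
  - induction B as [|b B IHB]; simpl; lia.
  - rewrite IH; clear IH.
    induction B as [|b B IHB]; simpl; [reflexivity|].
    destruct (f a b); simpl; lia.
Qed.

Lemma list_sum_map_le_mul (g : U -> nat) (c : nat) (l : list U) :
  (forall x, In x l -> g x <= c) -> list_sum (map g l) <= c * length l.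
Proof.
  induction l as [|x l IH]; simpl; intros Hg; [lia|].
  specialize (Hg x (or_introl eq_refl)) as Hx.
  assert (list_sum (map g l) <= c * length l) by (apply IH; auto).
  nia.
Qed.

Lemma mul_le_list_sum_map (g : U -> nat) (c : nat) (l : list U) :
  (forall x, In x l -> c <= g x) -> c * length l <= list_sum (map g l).
Proof.
  induction l as [|x l IH]; simpl; intros Hg; [lia|].
  specialize (Hg x (or_introl eq_refl)) as Hx.
  assert (c * length l <= list_sum (map g l)) by (apply IH; auto).
  nia.
Qed.

Lemma exists_le_average (g : U -> nat) (c : nat) (l : list U) :
  l <> nil -> list_sum (map g l) <= c * length l ->
  exists v, In v l /\ g v <= c.
Proof.
  intros Hl Hsum. apply NNPP. intros Hnone.
  assert (Hbig : forall x, In x l -> S c <= g x).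
  { intros x Hx. apply Nat.nle_gt. intros Hle. apply Hnone. now exists x. }
  apply mul_le_list_sum_map in Hbig.
  destruct l as [|a l]; [congruence|]. simpl in *. lia.
Qed.

End ListCounting.

Section SparseDigraph.
Local Open Scope nat_scope.
Context {U : Type}.
Variable eq_dec : forall x y : U, {x = y} + {x <> y}.
Variable E : U -> U -> bool.

Definition indeg (T : list U) (Y : U) : nat := length (filter (fun X => E X Y) T).
Definition outdeg (T : list U) (X : U) : nat := length (filter (E X) T).

Definition closed_nbhd (v x : U) : bool :=
  (if eq_dec x v then true else false) || E x v || E v x.

Definition independent (I : list U) : Prop :=
  forall X Y, In X I -> In Y I -> X <> Y -> E X Y = false.

Lemma length_filter_closed_nbhd (T : list U) (v : U) :
  NoDup T -> length (filter (closed_nbhd v) T) <= 1 + indeg T v + outdeg T v.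
Proof.
  intros HT.
  pose proof (proj1 (NoDup_count_occ eq_dec T) HT v) as Hocc.
  rewrite <- count_occ_alt in Hocc. unfold count_occ' in Hocc.
  unfold closed_nbhd, indeg, outdeg.
  eapply Nat.le_trans; [apply length_filter_orb|].
  pose proof (length_filter_orb (fun x => if eq_dec x v then true else false)
                (fun x => E x v) T).
  lia.
Qed.

Lemma independent_cons (v : U) (I : list U) :
  independent I -> (forall Y, In Y I -> closed_nbhd v Y = false) ->
  independent (v :: I).
Proof.
  intros HI Hfar X Y [<-|HX] [<-|HY] Hne; try congruence.
  - apply Hfar in HY. unfold closed_nbhd in HY.
    apply orb_false_elim in HY as [_ HY]. exact HY.
  - apply Hfar in HX. unfold closed_nbhd in HX.
    apply orb_false_elim in HX as [HX _]. apply orb_false_elim in HX as [_ HX]. exact HX.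
  - now apply HI.
Qed.

Variable k : nat.
Variable O : list U.
Hypothesis indeg_le : forall T, NoDup T -> incl T O -> forall Y, In Y T -> indeg T Y <= k.

Lemma exists_low_degree (T : list U) :
  T <> nil -> NoDup T -> incl T O ->
  exists v, In v T /\ indeg T v + outdeg T v <= 2 * k.
Proof.
  intros Hne HT HTO. apply exists_le_average; [exact Hne|].
  rewrite list_sum_map_add. unfold outdeg.
  rewrite list_sum_map_length_filter_swap. fold (indeg T).
  assert (list_sum (map (indeg T) T) <= k * length T).
  { apply list_sum_map_le_mul. intros Y HY. now apply indeg_le. }
  lia.
Qed.

Theorem exists_large_independent (T : list U) :
  NoDup T -> incl T O ->
  exists I, NoDup I /\ incl I T /\ independent I /\
    length T <= (2 * k + 1) * length I.
Proof.
  induction T as [T IH] using (well_founded_ind (well_founded_ltof _ (@length U))).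
  intros HT HTO.
  destruct (classic (T = nil)) as [->|Hne].
  { exists nil. split; [constructor|]. split; [easy|]. split; [now intros X Y []|simpl; lia]. }
  destruct (exists_low_degree T Hne HT HTO) as [v [Hv Hdeg]].
  set (T' := filter (fun x => negb (closed_nbhd v x)) T).
  pose proof (filter_length (closed_nbhd v) T) as Hsplit. fold T' in Hsplit.
  pose proof (length_filter_closed_nbhd T v HT) as Hnbhd.
  assert (Hvnbhd : In v (filter (closed_nbhd v) T)).
  { apply filter_In. split; [exact Hv|]. unfold closed_nbhd.
    now destruct (eq_dec v v). }
  assert (HT'T : incl T' T) by (intros x Hx; now apply filter_In in Hx).
  destruct (IH T') as [I [HI [HIT' [Hind Hlen]]]].
  - unfold ltof. destruct (filter (closed_nbhd v) T); [contradiction|]. simpl in Hsplit. lia.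
  - now apply NoDup_filter.
  - now intros x Hx; apply HTO, HT'T.
  - assert (Hfar : forall Y, In Y I -> closed_nbhd v Y = false).
    { intros Y HY. apply HIT', filter_In in HY as [_ HY]. now apply negb_true_iff. }
    exists (v :: I). repeat split.
    + constructor; [|exact HI]. intros HvI. apply Hfar in HvI.
      unfold closed_nbhd in HvI. destruct (eq_dec v v); [discriminate|contradiction].
    + intros x [<-|Hx]; [exact Hv|]. now apply HT'T, HIT'.
    + now apply independent_cons.
    + simpl. lia.
Qed.

End SparseDigraph.

Definition shadows_other (d : nat) (sigma : R) (X Y : PSet) : bool :=
  if excluded_middle_informative (X <> Y /\ shadows d sigma X Y) then true else false.

Lemma indeg_shadows_other_le (d : nat) (sigma : R) (k : nat) (O : list PSet) :
  exposed_k d sigma k O ->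
  forall T, NoDup T -> incl T O -> forall Y, In Y T ->
  (indeg (shadows_other d sigma) T Y <= k)%nat.
Proof.
  intros Hk T HT HTO Y HY. apply (Hk Y (HTO Y HY)).
  - split; [now apply NoDup_filter|]. intros X HX. apply filter_In in HX. now apply HTO.
  - intros X HX. apply filter_In in HX as [_ HX]. unfold shadows_other in HX.
    now destruct (excluded_middle_informative _).
Qed.

Lemma exposed_of_independent (d : nat) (sigma : R) (I : list PSet) :
  independent (shadows_other d sigma) I -> exposed d sigma I.
Proof.
  intros HI X Y HX HY Hne Hsh. specialize (HI X Y HX HY Hne).
  unfold shadows_other in HI.
  destruct (excluded_middle_informative _) as [_|Hn]; [discriminate|]. tauto.
Qed.

Theorem mainTheorem9 (d : nat) (sigma : R) (k : nat) (rho : R)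
  (O : list PSet)
  (Hsigma : 0 < sigma) (Hrho : 0 <= rho)
  (HO : NoDup O) (Hobj : forall o, In o O -> is_object d o)
  (Hsub : forall O', sub_fam O' O -> exposed d sigma O' -> density_le d O' rho)
  (Hk : exposed_k d sigma k O) :
  density_le d O ((2 * INR k + 1) * rho).
Proof.
  intros c r Hc Hr S [HS HSO] Hcounted.
  destruct (exists_large_independent (fun X Y => excluded_middle_informative (X = Y))
              (shadows_other d sigma) k O
              (indeg_shadows_other_le d sigma k O Hk)
              S HS HSO) as [I [HI [HIS [Hind Hlen]]]].
  assert (Hdens : density_le d I rho).
  { apply Hsub; [|now apply exposed_of_independent].
    split; [exact HI|]. now intros x Hx; apply HSO, HIS. }
  assert (HIrho : INR (length I) <= rho).
  { apply (Hdens c r Hc Hr I); [split; [exact HI|apply incl_refl]|].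
    intros o Ho. now apply Hcounted, HIS. }
  apply le_INR in Hlen. rewrite mult_INR, plus_INR, mult_INR in Hlen. simpl in Hlen.
  pose proof (pos_INR k).
  nra.
Qed.
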